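(* Let $\mathcal A$ be a linearly ordered $\mathbf{UL}_\omega$-algebra and let $B=\{p_1,\dots,p_k\}\subseteq A$. Let $$M=\Big\{\prod_{i=1}^kp_i^{\alpha(i)}:\alpha\in\mathbb N^k\Big\},$$ and for $a\in M$ and $b\in B$ let $(a\mapsto b]=\{c\in M: ac\le b\}$. For every $p\in B$, let $M\Rightarrow p=\{(m\mapsto p]: m\in M\}$. Then: (i) $M\Rightarrow p$ is linearly ordered under set inclusion; (ii) $M\Rightarrow p$ is finite.
   Context: A $\mathbf{UL}$-algebra is a structure $\langle A,\wedge,\vee,\cdot,\to,e,f,\bot,\top\rangle$ such that: - $\langle A,\wedge,\vee,\bot,\top\rangle$ is a bounded lattice; - $\langle A,\cdot,e\rangle$ is a commutative monoid; - $xy\le z$ iff $y\le x\to z$; - for all $x,y,u,v$: $\lambda_u((x\vee y)\to x)\vee\lambda_v((x\vee y)\to y)=e$, where $\lambda_a(b)=(a\to ba)\wedge e$. A $\mathbf{UL}_\omega$-algebra is a $\mathbf{UL}$-algebra satisfying $x\to e=x^2\to e$ for all $x$. This class includes all $\mathbf{IUL}_\omega$-algebras. Powers: $x^0=e$, $x^{n+1}=x^nx$. $\mathbb N=\{0,1,2,\dots\}$, and $\alpha(i)$ is the $i$-th component of $\alpha\in\mathbb N^k$. *)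

From mathcomp Require Import all_boot.
Set Implicit Arguments. Unset Strict Implicit. Unset Printing Implicit Defensive.

Record ULalg := {
  car :> Type;
  meet : car -> car -> car;
  join : car -> car -> car;
  mul  : car -> car -> car;
  imp  : car -> car -> car;
  e : car; f : car; bot : car; top : car;
  meetA : forall x y z, meet x (meet y z) = meet (meet x y) z;
  joinA : forall x y z, join x (join y z) = join (join x y) z;
  meetC : forall x y, meet x y = meet y x;
  joinC : forall x y, join x y = join y x;
  meet_absorb : forall x y, meet x (join x y) = x;
  join_absorb : forall x y, join x (meet x y) = x;
  join_bot : forall x, join bot x = x;
  meet_top : forall x, meet top x = x;
  mulA : forall x y z, mul x (mul y z) = mul (mul x y) z;
  mulC : forall x y, mul x y = mul y x;
  mul_e : forall x, mul e x = x;
  (* residuation: xy <= z iff y <= x -> z, with u <= v := join u v = v *)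
  residuation : forall x y z, join (mul x y) z = z <-> join y (imp x z) = imp x z;
  (* prelinearity: lambda_u((x v y) -> x) v lambda_v((x v y) -> y) = e,
     lambda_a(b) = (a -> b a) /\ e *)
  prelin : forall x y u v,
    join (meet (imp u (mul (imp (join x y) x) u)) e)
         (meet (imp v (mul (imp (join x y) y) v)) e) = e
}.

Section Ops.
Variable A : ULalg.

Definition le (x y : A) : Prop := join x y = y.

Definition ULomega : Prop := forall x : A, imp x (e A) = imp (mul x x) (e A).

Definition linearly_ordered : Prop := forall x y : A, le x y \/ le y x.

Fixpoint pw (x : A) (n : nat) : A :=
  match n with 0 => e A | n'.+1 => mul (pw x n') x end.

Definition mprod (k : nat) (p : 'I_k -> A) (alpha : 'I_k -> nat) : A :=
  foldr (fun i acc => mul acc (pw (p i) (alpha i))) (e A) (enum 'I_k).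

Definition inM (k : nat) (p : 'I_k -> A) (a : A) : Prop :=
  exists alpha : 'I_k -> nat, a = mprod p alpha.

Definition seg (k : nat) (p : 'I_k -> A) (a b : A) : A -> Prop :=
  fun c => inM p c /\ le (mul a c) b.

Definition incl_set (X Y : A -> Prop) : Prop := forall c, X c -> Y c.
Definition same_set (X Y : A -> Prop) : Prop := forall c, X c <-> Y c.
End Ops.

From HB Require Import structures.
From mathcomp Require Import all_boot zify.
From Stdlib Require Import Classical ClassicalEpsilon Wf_nat.
Set Implicit Arguments. Unset Strict Implicit. Unset Printing Implicit Defensive.

(* Part (i) holds because (m |-> p] is antitone in m and A is a chain.
   For (ii), let D(al) mean prod_i p_i^al(i) <= p. The identity x -> e = x^2 -> e
   makes the sign of a monomial with respect to e depend only on the support of its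
   exponent vector, so, A being a chain, D cannot be lost along one increment of the
   exponents and regained along another increment with the same support.  Combined
   with Dickson's lemma this forces D to be eventually constant in every exponent:
   there is N such that D(al) only depends on the exponents of al truncated at N.
   Hence (m |-> p] only depends on the truncated exponents of m, which take finitely
   many values. *)

Lemma tail_argmin (a : nat -> nat) j :
  exists j', j < j' /\ forall i, j < i -> a j' <= a i.
Proof.
pose P w := exists i, j < i /\ a i = w.
have [w [[[i [ji <-]] min_i] _]] :=
  dec_inh_nat_subset_has_unique_least_element P (fun w => classic (P w))
    (ex_intro P (a j.+1) (ex_intro _ j.+1 (conj (ltnSn j) erefl))).
by exists i; split=> // i' ji'; apply/leP/min_i; exists i'.
Qed.

Lemma nat_nondecreasing_subseq (a : nat -> nat) :
  exists2 phi : nat -> nat, {homo phi : m n / m < n} & {homo a \o phi : m n / m <= n}.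
Proof.
have [next next_min] := choice _ (tail_argmin a).
exists (fun n => iter n.+1 next 0).
  apply: homo_ltn; first exact: ltn_trans.
  by move=> n; case: (next_min (iter n.+1 next 0)).
apply: homo_leq => //; first exact: leq_trans.
move=> n /=.
have [lt_next _] := next_min (next (iter n next 0)).
have [lt_n min_n] := next_min (iter n next 0).
exact/min_n/(ltn_trans lt_n).
Qed.

Section CoherentPredicates.
Variable k : nat.
Implicit Types (u v x y : 'I_k -> nat) (D : ('I_k -> nat) -> Prop).

Definition coherent D := forall u v u' v',
  (forall l, u l <= v l) -> (forall l, u' l <= v' l) ->
  (forall l, (u l < v l) = (u' l < v' l)) -> D u -> D v' -> D v \/ D u'.

Lemma dickson (f : nat -> 'I_k -> nat) :
  exists2 phi : nat -> nat, {homo phi : m n / m < n} &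
    forall l, {homo (fun n => f (phi n) l) : m n / m <= n}.
Proof.
suff [phi phi_incr phi_mono] : exists2 phi : nat -> nat, {homo phi : m n / m < n} &
    forall l, l \in enum 'I_k -> {homo (fun n => f (phi n) l) : m n / m <= n}.
  by exists phi => // l; apply/phi_mono; rewrite mem_enum.
elim: (enum 'I_k) => [|l s [phi phi_incr phi_mono]]; first by exists id.
have [psi psi_incr psi_mono] := nat_nondecreasing_subseq (fun n => f (phi n) l).
exists (phi \o psi) => [m n /psi_incr/phi_incr //|l'].
rewrite inE => /predU1P[-> //|l's] m n mn.
exact/(phi_mono l' l's)/(ltnW_homo psi_incr).
Qed.

Variable D : ('I_k -> nat) -> Prop.
Hypothesis D_ext : forall u v, u =1 v -> D u = D v.
Hypothesis D_coherent : coherent D.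

Lemma no_two_jumps i x x' y y' :
  (forall l, l != i -> x l = x' l) -> (forall l, l != i -> y l = y' l) ->
  x i < x' i -> y i < y' i -> (forall l, x' l <= y l) -> x' i < y i ->
  ~ (D x <-> D x') -> ~ (D y <-> D y') -> False.
Proof.
move=> xx' yy' xi yi x'y x'yi jump_x jump_y.
have pointwise l : [/\ x l <= x' l, y l <= y' l, x l <= y' l,
    (x l < x' l) = (y l < y' l) & (x l < y' l) = (x' l < y l)].
  have := x'y l; case: (eqVneq l i) => [->|/[dup] /xx' -> /yy' ->] x'y_l;
    by split; try apply/idP/idP; lia.
have [x_x' y_y' x_y' supp_i supp_xy] := all_and5 pointwise.
have [[Dx nDx']|[nDx Dx']] : (D x /\ ~ D x') \/ (~ D x /\ D x').
  by case: (classic (D x)); case: (classic (D x')); tauto.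
all: have [[Dy nDy']|[nDy Dy']] : (D y /\ ~ D y') \/ (~ D y /\ D y')
  by case: (classic (D y)); case: (classic (D y')); tauto.
- by case: (D_coherent x_y' x'y supp_xy Dx Dy).
- by case: (D_coherent x_x' y_y' supp_i Dx Dy').
- by case: (D_coherent y_y' x_x' (fun l => esym (supp_i l)) Dy Dx').
- by case: (D_coherent x'y x_y' (fun l => esym (supp_xy l)) Dx' Dy').
Qed.

Definition stable_from i N := forall x y, (forall l, l != i -> x l = y l) ->
  N <= x i -> x i < y i -> D x <-> D y.

Lemma coherent_stable i : exists N, stable_from i N.
Proof.
apply: NNPP => no_N.
have jump N : exists xy : ('I_k -> nat) * ('I_k -> nat),
    [/\ forall l, l != i -> xy.1 l = xy.2 l, N <= xy.1 i, xy.1 i < xy.2 i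
      & ~ (D xy.1 <-> D xy.2)].
  apply: NNPP => no_jump; apply: no_N; exists N => x y xy Nx lt_xy.
  by apply: NNPP => not_equiv; apply: no_jump; exists (x, y).
have [c c_jump] := choice _ jump.
have [phi phi_incr phi_mono] := dickson (fun n => (c n).1).
have phi_ge n : n <= phi n.
  by elim: n => // n IH; apply: leq_ltn_trans IH (phi_incr _ _ (ltnSn n)).
pose m := ((c (phi 0)).2 i).+1.
have [x_x' Nx x_lt jump_x] := c_jump (phi 0).
have [y_y' Ny y_lt jump_y] := c_jump (phi m).
have x'_y l : (c (phi 0)).2 l <= (c (phi m)).1 l.
  case: (eqVneq l i) => [->|/x_x' <-]; last exact: phi_mono.
  exact/ltnW/(leq_trans (phi_ge m))/(leq_trans Ny).
apply: (no_two_jumps x_x' y_y' x_lt y_lt x'_y _ jump_x jump_y).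
exact: leq_trans (phi_ge m) Ny.
Qed.

Lemma coherent_trunc : exists N, forall a b,
  (forall l, minn (a l) N = minn (b l) N) -> D a <-> D b.
Proof.
have [Ns stable_Ns] := fin_all_exists coherent_stable.
exists (\max_i Ns i) => a b ab.
have stable i : stable_from i (\max_i Ns i).
  by move=> x y xy Nx; apply: stable_Ns xy (leq_trans (leq_bigmax i) Nx).
set N := \max_i Ns i in ab stable.
pose mix (s : seq 'I_k) l := if l \in s then b l else a l.
suff walk s : D a <-> D (mix s).
  by rewrite (walk (enum 'I_k)) (D_ext (v := b)) // => l; rewrite /mix mem_enum.
elim: s => [|i s IH]; first by rewrite (D_ext (v := a)).
rewrite IH.
have agree l : l != i -> mix s l = mix (i :: s) l.
  by move=> /negbTE l_i; rewrite /mix inE l_i.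
have mix_i : mix (i :: s) i = b i by rewrite /mix inE eqxx.
have mix_s_i : mix s i = a i \/ mix s i = b i by rewrite /mix; case: ifP; [right|left].
have := ab i; case: (ltngtP (mix s i) (mix (i :: s) i)) => [lt|gt|eq] ab_i.
- by apply: (stable i _ _ agree _ lt); rewrite mix_i in lt; lia.
- symmetry; apply: (stable i _ _ _ _ gt) => [l /agree //|].
  by rewrite mix_i in gt *; lia.
- by rewrite (D_ext (v := mix (i :: s))) // => l; case: (eqVneq l i) => [->|/agree].
Qed.

End CoherentPredicates.

Local Infix "**" := (@mul _) (at level 40, left associativity).

Section ULTheory.
Variable A : ULalg.
Implicit Types x y z : A.

Lemma le_refl x : le x x.
Proof. by rewrite /le -{2}(meet_absorb x x) join_absorb. Qed.

Lemma le_trans x y z : le x y -> le y z -> le x z.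
Proof. by rewrite /le => xy <-; rewrite joinA xy. Qed.

Lemma resP x y z : le (x ** y) z <-> le y (imp x z).
Proof. exact: residuation. Qed.

Lemma mulr_e x : x ** e A = x.
Proof. by rewrite mulC mul_e. Qed.

Lemma le_mul2l x y z : le x y -> le (z ** x) (z ** y).
Proof. by move=> xy; apply/resP/(le_trans xy)/resP/le_refl. Qed.

Lemma le_mul_e x y : le y (e A) -> le (x ** y) x.
Proof. by move=> /(le_mul2l x); rewrite mulr_e. Qed.

Lemma ge_mul_e x y : le (e A) y -> le x (x ** y).
Proof. by move=> /(le_mul2l x); rewrite mulr_e. Qed.

Lemma pwD x m n : pw x (m + n) = pw x m ** pw x n.
Proof. by elim: n => [|n IH]; rewrite ?addn0 ?mulr_e // addnS /= IH mulA. Qed.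

HB.instance Definition _ :=
  Monoid.isComLaw.Build A (e A) (@mul A) (@mulA A) (@mulC A) (@mul_e A).

Definition e_equiv x x' := forall y, le (x ** y) (e A) <-> le (x' ** y) (e A).

Lemma e_equiv_mul x x' z z' :
  e_equiv x x' -> e_equiv z z' -> e_equiv (x ** z) (x' ** z').
Proof.
move=> xx' zz' y; rewrite -!mulA xx' !(mulA x') !(mulC x') -!mulA.
by rewrite zz'.
Qed.

Section Monomials.
Variables (k : nat) (p : 'I_k -> A).
Implicit Types al be : 'I_k -> nat.

Lemma mprodE al : mprod p al = \big[@mul A/e A]_(i < k) pw (p i) (al i).
Proof.
rewrite /mprod -big_enum /=.
by elim: (enum 'I_k) => [|i s IH] /=; rewrite ?big_nil ?big_cons ?IH 1?mulC.
Qed.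

Lemma eq_mprod al be : al =1 be -> mprod p al = mprod p be.
Proof. by move=> al_be; rewrite !mprodE; apply: eq_bigr => i _; rewrite al_be. Qed.

Lemma mprodD al be : mprod p (fun i => al i + be i) = mprod p al ** mprod p be.
Proof. by rewrite !mprodE -big_split; apply: eq_bigr => i _; rewrite pwD. Qed.

Lemma mprod_sub al be : (forall i, al i <= be i) ->
  mprod p be = mprod p al ** mprod p (fun i => be i - al i).
Proof. by move=> al_be; rewrite -mprodD; apply: eq_mprod => i; rewrite subnKC. Qed.

End Monomials.

Lemma seg_antimonotone k (p : 'I_k -> A) m1 m2 b :
  le m1 m2 -> incl_set (seg p m2 b) (seg p m1 b).
Proof.
move=> m12 c [Mc le_c]; split=> //; apply: le_trans le_c.
by rewrite !(mulC _ c); apply: le_mul2l.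
Qed.

Lemma seg_mprod_trunc k (p : 'I_k -> A) b N :
  (forall al be, (forall l, minn (al l) N = minn (be l) N) ->
     le (mprod p al) b <-> le (mprod p be) b) ->
  forall al al', (forall l, minn (al l) N = minn (al' l) N) ->
  same_set (seg p (mprod p al) b) (seg p (mprod p al') b).
Proof.
move=> trunc al al' al_al' c; split=> -[[be ->] le_c]; split; try by exists be.
all: move: le_c; rewrite -!mprodD; apply: (iffLR (trunc _ _ _)) => l.
all: by have := al_al' l; lia.
Qed.

Section Omega.
Hypothesis omega : ULomega A.

Lemma e_equiv_pw x n : 0 < n -> e_equiv (pw x n) x.
Proof.
elim: n => [//|[|n] IH _ y]; first by rewrite /= mul_e.
by rewrite /= -mulA IH // mulA !resP -omega.
Qed.

Lemma e_equiv_mprod k (p : 'I_k -> A) al be :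
  (forall i, (al i == 0) = (be i == 0)) -> e_equiv (mprod p al) (mprod p be).
Proof.
move=> supp; rewrite !mprodE; apply: (big_ind2 e_equiv) => [//|x x' z z'|i _].
  exact: e_equiv_mul.
have := supp i; case: (al i) => [|m]; case: (be i) => [|n] //= _ y.
by rewrite (e_equiv_pw (p i) (ltn0Sn m) y) (e_equiv_pw (p i) (ltn0Sn n) y).
Qed.

Hypothesis linear : linearly_ordered A.

Lemma mprod_le_coherent k (p : 'I_k -> A) b : coherent (fun al => le (mprod p al) b).
Proof.
move=> u v u' v' uv uv' supp Du Dv'.
have same_supp : e_equiv (mprod p (fun l => v l - u l)) (mprod p (fun l => v' l - u' l)).
  by apply: e_equiv_mprod => l; rewrite !subn_eq0 (leqNgt (v l)) (leqNgt (v' l)) supp.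
rewrite (mprod_sub p uv); rewrite (mprod_sub p uv') in Dv'.
case: (linear (mprod p (fun l => v' l - u' l)) (e A)) => [neg|pos].
  left; apply: le_trans Du; apply: le_mul_e.
  by have := same_supp (e A); rewrite !mulr_e => ->.
by right; apply: le_trans Dv'; apply: ge_mul_e.
Qed.

End Omega.
End ULTheory.

Theorem lemma4p7 (A : ULalg) (Hom : ULomega A) (Hlin : linearly_ordered A)
  (k : nat) (p : 'I_k -> A) (j : 'I_k) :
  (* (i) M => p_j is linearly ordered under inclusion *)
  (forall m1 m2 : A, inM p m1 -> inM p m2 ->
     incl_set (seg p m1 (p j)) (seg p m2 (p j)) \/
     incl_set (seg p m2 (p j)) (seg p m1 (p j))) /\
  (* (ii) M => p_j is finite: finitely many m_1..m_n in M represent all its members *)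
  (exists (n : nat) (ms : 'I_n -> A), (forall i, inM p (ms i)) /\
     forall m, inM p m -> exists i : 'I_n,
       same_set (seg p m (p j)) (seg p (ms i) (p j))).
Proof.
split=> [m1 m2 _ _|].
  by case: (Hlin m1 m2) => m12; [right|left]; apply: seg_antimonotone.
have D_ext al be : al =1 be -> le (mprod p al) (p j) = le (mprod p be) (p j).
  by move=> /(eq_mprod p) ->.
have [N trunc] := coherent_trunc D_ext (mprod_le_coherent Hom Hlin (p := p) (b := p j)).
pose T := {ffun 'I_k -> 'I_N.+1}.
exists #|T|, (fun i => mprod p (fun l => (enum_val i : T) l)).
split=> [i|_ [al ->]]; first by eexists.
exists (enum_rank ([ffun l => inord (minn (al l) N)] : T)).
apply: seg_mprod_trunc trunc _ _ _ => l.
by rewrite enum_rankK ffunE inordK ?ltnS ?geq_minr // -minnA minnn.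
Qed.
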